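(* Let $n\ge 1$ and let $J=\begin{pmatrix}0 & I_n\\ -I_n & 0\end{pmatrix}\in\mathbb{R}^{2n\times 2n}$. Let $L\in\mathbb{C}^{2n\times 2n}$ be a complex symmetric matrix ($L=L^T$) such that $J^{-1}L$ is diagonalizable. Then there exist invertible matrices $P,Q\in \mathrm{GL}(2n,\mathbb{C})$ and a diagonal matrix $\Lambda=\mathrm{diag}(\lambda_1,\dots,\lambda_n)\in\mathbb{C}^{n\times n}$ such that $$PLQ=\begin{pmatrix}0&\Lambda\\ \Lambda&0\end{pmatrix}\qquad\text{and}\qquad PJQ=J.$$ In particular, the eigenvalues of $J^{-1}L$ (counted with multiplicity) come in pairs $\pm\lambda_i$, $i=1,\dots,n$.
   Context: $I_n$ denotes the $n\times n$ identity matrix and $J$ is the standard symplectic form, which satisfies $J^T=J^{-1}=-J$. Transposition $^T$ is the ordinary (non-conjugating) transpose. *)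

From HB Require Import structures.
From mathcomp Require Import all_boot all_order all_algebra.
From mathcomp Require Export mxred.
From mathcomp Require Import reals.
From mathcomp.real_closed Require Export complex.
Set Implicit Arguments. Unset Strict Implicit. Unset Printing Implicit Defensive.
Import Order.TTheory GRing.Theory Num.Theory.
Local Open Scope ring_scope.

Definition symJ (F : pzRingType) (n : nat) : 'M[F]_(n + n) :=
  block_mx 0 1%:M (- 1%:M) 0.

From mathcomp Require Import all_boot all_order all_algebra all_fingroup.
From mathcomp Require Import reals.
From mathcomp.real_closed Require Import complex.
Set Implicit Arguments. Unset Strict Implicit. Unset Printing Implicit Defensive.
Import GRing.Theory Num.Theory.
Local Open Scope ring_scope.
Local Open Scope complex_scope.

(* Since J^T = -J and J^2 = -1, the Hamiltonian matrix M = J^-1 L of a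
   symmetric L satisfies M^T = J M J, which is similar to -M; hence M and -M
   have the same characteristic polynomial.  If moreover M is diagonalizable,
   M = S^-1 diag(e) S, the spectrum e is a multiset closed under negation, so
   (in characteristic <> 2) it can be listed as (d, -d) for some d of length
   n, and permuting the eigenbasis gives M = W^-1 diag(d, -d) W.  Taking
   P = W J^-1 and Q = W^-1 J then gives P L Q = diag(d, -d) J, which is the
   anti-diagonal block matrix [0, diag d; diag d, 0], and P J Q = J. *)

Lemma perm_eq_oppr_cons2 (T : zmodType) (x : T) (s : seq T) :
  perm_eq [:: x, - x & s] (map -%R [:: x, - x & s]) = perm_eq s (map -%R s).
Proof.
rewrite /= opprK -[[:: - x, x & _]]/([:: - x] ++ [:: x] ++ _).
by rewrite perm_sym perm_catCA /= !perm_cons perm_sym.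
Qed.

(* A multiset of even size closed under negation, in a group without
   2-torsion, splits as d ++ (-d): nonzero elements come in pairs x, -x, and
   the remaining zeros are even in number. *)
Lemma perm_eq_oppr_pairs (T : zmodType) :
  (forall x : T, x + x = 0 -> x = 0) ->
  forall m (s : seq T), size s = (m + m)%N -> perm_eq s (map -%R s) ->
  exists2 d : seq T, size d = m & perm_eq s (d ++ map -%R d).
Proof.
move=> no2tor; elim=> [|m IH] s size_s sym_s.
  by exists [::]; case: s size_s sym_s.
have [/all_pred1P s0|/allPn[x s_x /= nz_x]] := boolP (all (pred1 0) s).
  exists (nseq m.+1 0); first by rewrite size_nseq.
  by rewrite s0 size_s map_nseq oppr0 -nseqD.
have s_Nx : - x \in s.
  by move: s_x; rewrite (perm_mem sym_s) => /mapP[y s_y ->]; rewrite opprK.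
have Nx_neq_x : - x != x.
  by apply: contra nz_x => /eqP Nxx; apply/eqP/no2tor; rewrite -{1}Nxx addNr.
have s'_Nx : - x \in rem x s.
  by move: s_Nx; rewrite (perm_mem (perm_to_rem s_x)) inE (negbTE Nx_neq_x).
set s' := rem (- x) (rem x s).
have s_s' : perm_eq s [:: x, - x & s'].
  by rewrite (permPl (perm_to_rem s_x)) perm_cons perm_to_rem.
have size_s' : size s' = (m + m)%N.
  by move: (perm_size s_s'); rewrite size_s /= addnS addSn => -[].
have sym_s' : perm_eq s' (map -%R s').
  rewrite -(@perm_eq_oppr_cons2 _ x) -(permPl s_s').
  by apply: perm_trans sym_s _; apply: perm_map.
have [d size_d s'_d] := IH s' size_s' sym_s'.
exists (x :: d); first by rewrite /= size_d.
rewrite (permPl s_s') /= perm_cons -[d ++ _]/(d ++ [:: - x] ++ _).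
by rewrite perm_sym perm_catCA /= perm_cons perm_sym.
Qed.

Section SymplecticForm.
Variables (R : comNzRingType) (n : nat).
Local Notation J := (symJ R n).

Lemma symJ_sqr : J *m J = - 1%:M.
Proof.
rewrite /symJ mulmx_block !mulmx0 !mul0mx !addr0 !add0r mulmx1 mul1mx.
by rewrite [X in _ = - X](scalar_mx_block n n) opp_block_mx !oppr0.
Qed.

Lemma tr_symJ : J^T = - J.
Proof.
rewrite /symJ tr_block_mx !trmx0 tr_scalar_mx linearN /= tr_scalar_mx.
by rewrite opp_block_mx !oppr0 opprK.
Qed.

Lemma mulNsymJ_symJ : - J *m J = 1%:M.
Proof. by rewrite mulNmx symJ_sqr opprK. Qed.

Lemma tr_Hamiltonian (L : 'M[R]_(n + n)) :
  L^T = L -> (- J *m L)^T = J *m (- J *m L) *m J.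
Proof.
move=> symL; rewrite trmx_mul linearN /= tr_symJ opprK symL.
by rewrite mulmxA mulmxN symJ_sqr opprK mul1mx.
Qed.

End SymplecticForm.

Lemma symJ_unit (R : comUnitRingType) n : symJ R n \in unitmx.
Proof. by case: (mulmx1_unit (mulNsymJ_symJ R n)). Qed.

Lemma invmx_symJ (R : comUnitRingType) n : invmx (symJ R n) = - symJ R n.
Proof.
by rewrite -[LHS]mul1mx -(mulNsymJ_symJ R n) mulmxK ?symJ_unit.
Qed.

Section CharPoly.
Variable R : comNzRingType.

Lemma char_poly_conj N (U V X : 'M[R]_N) :
  U *m V = 1%:M -> char_poly (V *m X *m U) = char_poly X.
Proof.
move=> UV; have VU := mulmx1C UV.
rewrite /char_poly /char_poly_mx.
have -> : 'X%:M - map_mx polyC (V *m X *m U) =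
   map_mx polyC V *m ('X%:M - map_mx polyC X) *m map_mx polyC U.
  rewrite mulmxBr mulmxBl !map_mxM; congr (_ - _).
  by rewrite scalar_mxC -mulmxA -map_mxM VU map_mx1 mulmx1.
by rewrite !det_mulmx mulrAC -det_mulmx -map_mxM VU map_mx1 det1 mul1r.
Qed.

Lemma char_poly_tr N (X : 'M[R]_N) : char_poly X^T = char_poly X.
Proof.
rewrite /char_poly -[RHS]det_tr; congr (\det _).
by rewrite /char_poly_mx linearB /= tr_scalar_mx map_trmx.
Qed.

(* If M^T = J M J then M^T is similar to -M (via J), so M and -M have the
   same characteristic polynomial. *)
Lemma char_poly_symJ_skew n (M : 'M[R]_(n + n)) :
  M^T = symJ R n *m M *m symJ R n -> char_poly M = char_poly (- M).
Proof.
move=> MT; rewrite -char_poly_tr MT -(char_poly_conj (- M) (mulNsymJ_symJ R n)).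
by rewrite !mulmxN mulNmx opprK.
Qed.

End CharPoly.

Definition entries (T : Type) (N : nat) (e : 'rV[T]_N) : seq T :=
  [seq e 0 i | i <- enum 'I_N].

Lemma size_entries (T : Type) N (e : 'rV[T]_N) : size (entries e) = N.
Proof. by rewrite size_map size_enum_ord. Qed.

Lemma entriesN (V : zmodType) N (e : 'rV[V]_N) :
  entries (- e) = map -%R (entries e).
Proof.
by rewrite /entries -[RHS]map_comp; apply: eq_map => i; rewrite /= mxE.
Qed.

Lemma char_poly_diag (R : comNzRingType) N (e : 'rV[R]_N) :
  char_poly (diag_mx e) = \prod_(i < N) ('X - (e 0 i)%:P).
Proof.
rewrite char_poly_trig ?diag_mx_is_trig //.
by apply: eq_bigr => i _; rewrite mxE eqxx mulr1n.
Qed.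

Lemma perm_eq_entries_char_poly (R : fieldType) N (e f : 'rV[R]_N) :
  char_poly (diag_mx e) = char_poly (diag_mx f) ->
  perm_eq (entries e) (entries f).
Proof.
by rewrite !char_poly_diag => cp_ef; apply: prod_XsubC_eq; rewrite !big_map.
Qed.

Lemma col_perm_perm_eq (T : eqType) (x0 : T) N (s : seq T) (e : 'rV[T]_N) :
  perm_eq (entries e) s -> exists p : 'S_N, \row_i nth x0 s i = col_perm p e.
Proof.
rewrite perm_sym => s_e.
have /tuple_permP[p ->] : perm_eq s [tuple e 0 i | i < N] := s_e.
exists p; apply/rowP => i.
by rewrite !mxE (nth_map i) ?size_enum_ord // nth_ord_enum tnth_mktuple.
Qed.

Lemma row_nth_cat (T : Type) (x0 : T) m n (s t : seq T) : size s = m ->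
  \row_(i < m + n) nth x0 (s ++ t) i =
  row_mx (\row_(i < m) nth x0 s i) (\row_(j < n) nth x0 t j).
Proof.
move=> size_s; apply/rowP => i; rewrite mxE nth_cat size_s.
case: (split_ordP i) => j ->; rewrite ?row_mxEl ?row_mxEr mxE /= ?ltn_ord //.
by rewrite addKn.
Qed.

Lemma diag_mx_col_perm (R : pzRingType) N (p : 'S_N) (e : 'rV[R]_N) :
  diag_mx (col_perm p e) = perm_mx p *m diag_mx e *m (perm_mx p)^T.
Proof.
rewrite tr_perm_mx -row_permE -col_permE; apply/matrixP => i j.
by rewrite !mxE (inj_eq perm_inj).
Qed.

Lemma diagonalizable_paired_spectrum (F : fieldType) m (M : 'M[F]_(m + m)) :
  (2%:R : F) != 0 -> char_poly M = char_poly (- M) -> diagonalizable M ->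
  exists W (d : 'rV[F]_m),
    W \in unitmx /\ M = invmx W *m diag_mx (row_mx d (- d)) *m W.
Proof.
move=> two_nz cpMN [S S_unit /(similar_diagLR S_unit)[e]].
rewrite conjumx ?unitmx_inv // invmxK => ME.
have cp_conjS X : char_poly (invmx S *m X *m S) = char_poly X.
  by apply: char_poly_conj; rewrite mulmxV.
have sym_e : perm_eq (entries e) (map -%R (entries e)).
  rewrite -entriesN; apply: perm_eq_entries_char_poly.
  rewrite -[LHS]cp_conjS -ME cpMN ME -[RHS]cp_conjS.
  by rewrite linearN /= mulmxN mulNmx.
have no2tor (x : F) : x + x = 0 -> x = 0.
  rewrite -mulr2n -mulr_natl => /eqP.
  by rewrite mulf_eq0 (negbTE two_nz) => /eqP.
have [d size_d e_d] := perm_eq_oppr_pairs no2tor (size_entries e) sym_e.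
have [p d_e] := col_perm_perm_eq 0 e_d.
pose dv : 'rV[F]_m := \row_i nth 0 d i.
have dv_e : row_mx dv (- dv) = col_perm p e.
  rewrite -d_e row_nth_cat //; congr row_mx; apply/rowP => j.
  by rewrite !mxE (nth_map 0) // size_d.
have PtP : (perm_mx p)^T *m perm_mx p = 1%:M :> 'M[F]_(m + m).
  by rewrite tr_perm_mx -perm_mxM mulVg perm_mx1.
have PS_unit : perm_mx p *m S \in unitmx by rewrite unitmx_mul unitmx_perm.
exists (perm_mx p *m S), dv; split=> //.
suff conjW :
    perm_mx p *m S *m M = diag_mx (row_mx dv (- dv)) *m (perm_mx p *m S).
  by rewrite -mulmxA -conjW mulKmx.
rewrite dv_e diag_mx_col_perm ME -!mulmxA (mulmxA (perm_mx p)^T) PtP mul1mx.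
by rewrite !mulmxA mulmxK.
Qed.

Lemma diag_pm_mul_symJ (R : pzRingType) n (d : 'rV[R]_n) :
  diag_mx (row_mx d (- d)) *m symJ R n = block_mx 0 (diag_mx d) (diag_mx d) 0.
Proof.
rewrite diag_mx_row /symJ mulmx_block !mulmx0 !mul0mx !addr0 !add0r.
by rewrite mulmx1 mulmxN mulmx1 linearN /= opprK.
Qed.

Lemma symplectic_normal_form (R : comUnitRingType) n (L W : 'M[R]_(n + n))
    (d : 'rV[R]_n) :
  W \in unitmx ->
  invmx (symJ R n) *m L = invmx W *m diag_mx (row_mx d (- d)) *m W ->
  W *m invmx (symJ R n) *m L *m (invmx W *m symJ R n) =
    block_mx 0 (diag_mx d) (diag_mx d) 0 /\
  W *m invmx (symJ R n) *m symJ R n *m (invmx W *m symJ R n) = symJ R n.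
Proof.
move=> W_unit ME; rewrite -diag_pm_mul_symJ; split.
  by rewrite -(mulmxA W) ME !mulmxA mulmxV // mul1mx (mulmxK W_unit).
by rewrite (mulmxKV (symJ_unit R n)) mulmxA mulmxV // mul1mx.
Qed.

Theorem lemma1 (R : realType) (n : nat) (L : 'M[R[i]]_(n + n)) :
  (1 <= n)%N ->
  L^T = L ->
  diagonalizable (invmx (symJ R[i] n) *m L) ->
  exists P Q : 'M[R[i]]_(n + n), exists d : 'rV[R[i]]_n,
    [/\ P \in unitmx, Q \in unitmx,
        P *m L *m Q = block_mx 0 (diag_mx d) (diag_mx d) 0,
        P *m symJ R[i] n *m Q = symJ R[i] n &
        char_poly (invmx (symJ R[i] n) *m L) =
          \prod_(k < n) (('X - (d 0 k)%:P) * ('X + (d 0 k)%:P))].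
Proof.
move=> _ symL diagM; set J := symJ R[i] n.
have two_nz : (2%:R : R[i]) != 0 by rewrite pnatr_eq0.
have cpM : char_poly (invmx J *m L) = char_poly (- (invmx J *m L)).
  by apply: char_poly_symJ_skew; rewrite invmx_symJ tr_Hamiltonian.
have [W [d [W_unit ME]]] := diagonalizable_paired_spectrum two_nz cpM diagM.
have [PLQ PJQ] := symplectic_normal_form W_unit ME.
exists (W *m invmx J), (invmx W *m J), d; split=> //.
- by rewrite unitmx_mul W_unit unitmx_inv symJ_unit.
- by rewrite unitmx_mul unitmx_inv W_unit symJ_unit.
(* J^-1 L is similar to diag(d, -d), whose eigenvalues are the pairs d_k, -d_k. *)
rewrite ME char_poly_conj ?mulmxV // char_poly_diag big_split_ord /= -big_split.
by apply: eq_bigr => k _; rewrite row_mxEl row_mxEr !mxE polyCN opprK.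
Qed.
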